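(* Let $\theta_1,\dots,\theta_m$ be i.i.d. random variables uniformly distributed on $[0,1]$. If $m\ge 20$, then $$\mathbb{E}\left[\min_{j\in[m]}\left(\tfrac14-\theta_j\right)^2\right]\le \frac{1.01}{2(m+1)(m+2)}.$$ *)

From HB Require Import structures.
From mathcomp Require Import all_boot all_order all_algebra.
From mathcomp Require Import all_classical all_reals all_analysis.
Set Implicit Arguments. Unset Strict Implicit. Unset Printing Implicit Defensive.
Import Order.TTheory GRing.Theory Num.Theory.
Local Open Scope classical_set_scope.
Local Open Scope ring_scope.

(* Mutual independence of a finite family of real random variables:
   product rule for every family of Borel sets (taking B j = setT for
   unused indices gives the product rule for every subfamily). *)
Definition mutually_independent d (T : measurableType d) (R : realType)
  (P : probability T R) (m : nat) (X : 'I_m -> T -> R) : Prop :=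
  forall B : 'I_m -> set R, (forall j, measurable (B j)) ->
    P (\bigcap_(j in [set: 'I_m]) (X j @^-1` B j)) =
    (\prod_(j < m) P (X j @^-1` B j))%E.

Definition uniform01 d (T : measurableType d) (R : realType)
  (P : probability T R) (X : T -> R) : Prop :=
  forall B : set R, measurable B ->
    P (X @^-1` B) = uniform_prob (@ltr01 R) B.

(* Let Y be the minimum.  For [0 <= r <= 1/4], Y > r^2 exactly when every
   theta_j avoids [[1/4 - r, 1/4 + r]], so P(Y > r^2) = (1 - 2r)^m by
   independence.  Discretizing the layer-cake formula E Y = int_0^oo P(Y > s) ds
   on the levels s_k = (k/4n)^2, k <= n, followed by the level 9/16 >= Y, gives
     E Y <= sum_(k < n) (2k+1)/(16 n^2) (1 - k/2n)^m + 2^-(m+1).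
   Bounding (1 - k/N)^m by the ratio of rising factorials (N-k)^(m) / N^(m)
   turns the sum into hockey-stick sums with the closed form
   (N+m)(2N+m) / (4 N^2 (m+1)(m+2)), N = 2n.  For n = 200 m, and since
   2^m >= 1000 (m+1)(m+2) when m >= 20, the total is below 1.01/(2(m+1)(m+2)). *)

From HB Require Import structures.
From mathcomp Require Import all_boot all_order all_algebra.
From mathcomp Require Import all_classical all_reals all_analysis.
From mathcomp Require Import measurable_realfun.
From mathcomp Require Import ring lra.

Set Implicit Arguments.
Unset Strict Implicit.
Unset Printing Implicit Defensive.

Import Order.TTheory GRing.Theory Num.Theory.
Local Open Scope classical_set_scope.
Local Open Scope ring_scope.

Section RisingFactorial.
Variable R : realFieldType.

Definition rising (x : R) (k : nat) : R := \prod_(i < k) (x + i%:R).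

Lemma risingSr x k : rising x k.+1 = rising x k * (x + k%:R).
Proof. by rewrite /rising big_ord_recr. Qed.

Lemma risingSl x k : rising x k.+1 = x * rising (x + 1) k.
Proof.
rewrite /rising big_ord_recl addr0; congr (_ * _); apply: eq_bigr => i _.
by rewrite /bump /= natrD addrA.
Qed.

Lemma rising0 k : (0 < k)%N -> rising 0 k = 0.
Proof. by case: k => // k _; rewrite risingSl mul0r. Qed.

Lemma rising_ge0 x k : 0 <= x -> 0 <= rising x k.
Proof. by move=> x_ge0; apply: prodr_ge0 => i _; apply: addr_ge0. Qed.

Lemma rising_gt0 x k : 0 < x -> 0 < rising x k.
Proof. by move=> x_gt0; apply: prodr_gt0 => i _; apply: ltr_wpDr. Qed.

Lemma sum_rising N k : (0 < k)%N ->
  \sum_(j < N.+1) rising j%:R k = rising N%:R k.+1 / k.+1%:R.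
Proof.
move=> k_gt0; apply: (canRL (mulfK _)); first by rewrite pnatr_eq0.
elim: N => [|N IH]; first by rewrite big_ord1 !rising0 // mul0r.
have step : rising N.+1%:R k.+1 - rising N%:R k.+1 = k.+1%:R * rising N.+1%:R k.
  by rewrite risingSr risingSl -natr1 -!natr1; ring.
by rewrite big_ord_recr /= mulrDl IH -[RHS](subrK (rising N%:R k.+1)) step mulrC addrC.
Qed.

Lemma sum_weighted_rising N m : (0 < m)%N ->
  \sum_(j < N.+1) ((2 * N + 1)%:R - 2 * j%:R) * rising j%:R m =
  (N%:R + m%:R) * (2 * N%:R + m%:R) / ((m%:R + 1) * (m%:R + 2)) * rising N%:R m.
Proof.
move=> m_gt0.
have -> : \sum_(j < N.+1) ((2 * N + 1)%:R - 2 * j%:R) * rising j%:R m =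
    (2 * N + 2 * m + 1)%:R * \sum_(j < N.+1) rising j%:R m
    - 2 * \sum_(j < N.+1) rising j%:R m.+1.
  rewrite !big_distrr /= -sumrB; apply: eq_bigr => j _.
  by rewrite risingSr !natrD ?natrM; ring.
rewrite !sum_rising // !risingSr -!natr1 !natrD ?natrM.
have m_ge0 : 0 <= m%:R :> R by [].
by field; apply/andP; split; apply/eqP; lra.
Qed.

Lemma expr_div_le_rising (a b : R) m : 0 <= a -> a <= b -> 0 < b ->
  (a / b) ^+ m <= rising a m / rising b m.
Proof.
move=> a_ge0 ab b_gt0.
rewrite /rising -prodf_div -[m in _ ^+ m]card_ord -prodr_const.
apply: ler_prod => i _; rewrite divr_ge0 //=; last exact: ltW.
have bi_gt0 : 0 < b + i%:R by apply: ltr_wpDr.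
rewrite ler_pdivrMr // mulrAC ler_pdivlMr //.
have : 0 <= i%:R :> R by [].
nra.
Qed.

Lemma sum_odd_weighted_powers_le N n m : (0 < m)%N -> (0 < N)%N -> (n <= N)%N ->
  \sum_(k < n) (2 * k + 1)%:R * (1 - k%:R / N%:R) ^+ m <=
  (N%:R + m%:R) * (2 * N%:R + m%:R) / ((m%:R + 1) * (m%:R + 2)) :> R.
Proof.
move=> m_gt0 N_gt0 nN.
have N_gt0R : 0 < N%:R :> R by rewrite ltr0n.
pose f k := (2 * k + 1)%:R * (rising (N - k)%:R m / rising N%:R m).
have term_le (k : 'I_N.+1) : (2 * k + 1)%:R * (1 - k%:R / N%:R) ^+ m <= f k.
  have kN : (k <= N)%N by rewrite -ltnS.
  have -> : 1 - k%:R / N%:R = (N - k)%:R / N%:R :> R.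
    by rewrite natrB // mulrBl divff // lt0r_neq0.
  rewrite /f ler_pM2l ?ltr0n ?addn1 //.
  by apply: expr_div_le_rising; rewrite ?ler_nat ?leq_subr.
have widen : \sum_(k < n) (2 * k + 1)%:R * (1 - k%:R / N%:R) ^+ m <= \sum_(k < N.+1) f k.
  rewrite (big_ord_widen N.+1 (fun k => (2 * k + 1)%:R * (1 - k%:R / N%:R) ^+ m) (leqW nN)).
  rewrite big_mkcond /=; apply: ler_sum => k _; case: ifP => _; first exact: term_le.
  by rewrite mulr_ge0 ?divr_ge0 ?rising_ge0.
apply: (le_trans widen).
have -> : \sum_(k < N.+1) f k =
    (\sum_(j < N.+1) ((2 * N + 1)%:R - 2 * j%:R) * rising j%:R m) / rising N%:R m.
  rewrite (reindex_inj rev_ord_inj) mulr_suml; apply: eq_bigr => j _ /=.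
  have jN : (j <= N)%N by rewrite -ltnS.
  by rewrite /f subSS subKn ?leq_subr // natrD natrM natrB //; ring.
by rewrite sum_weighted_rising // mulfK // lt0r_neq0 // rising_gt0.
Qed.

End RisingFactorial.

Section Grid.
Context {R : realFieldType} (n : nat).
Hypothesis n_gt0 : (0 < n)%N.

Definition grid_radius k : R := k%:R / (4 * n%:R).

(* The last level [9/16 = (1/4 - 1)^2] bounds [(1/4 - x)^2] on [[0, 1]]. *)
Definition grid_level k : R := if (k <= n)%N then grid_radius k ^+ 2 else 9 / 16.

Let n_gt0R : 0 < n%:R :> R. Proof. by rewrite ltr0n. Qed.
Let n_neq0 : n%:R != 0 :> R. Proof. exact: lt0r_neq0. Qed.

Lemma radius_ge0 k : 0 <= grid_radius k.
Proof. by rewrite divr_ge0 // mulr_ge0. Qed.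

Lemma radius_le k : (k <= n)%N -> grid_radius k <= 4^-1.
Proof.
move=> kn; have : k%:R <= n%:R :> R by rewrite ler_nat.
by rewrite /grid_radius ler_pdivrMr ?mulr_gt0 //; lra.
Qed.

Lemma grid_level0 : grid_level 0 = 0.
Proof. by rewrite /grid_level /grid_radius mul0r expr0n. Qed.

Lemma grid_level_nondecreasing k : grid_level k <= grid_level k.+1.
Proof.
rewrite /grid_level; case: (ltngtP k n) => [kn|//|->]; rewrite ?ltnn.
- rewrite lerXn2r ?nnegrE ?radius_ge0 //.
  by rewrite ler_pM2r ?invr_gt0 ?mulr_gt0 // ler_nat.
- have := radius_le (leqnn n); have := radius_ge0 n; nra.
Qed.

Lemma sum_grid_tail_le m : (0 < m)%N ->
  \sum_(k < n.+1) (grid_level k.+1 - grid_level k) * (1 - 2 * grid_radius k) ^+ m <=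
  (2 * n%:R + m%:R) * (4 * n%:R + m%:R) / (16 * n%:R ^+ 2 * ((m%:R + 1) * (m%:R + 2)))
  + 2^-1 ^+ m / 2.
Proof.
move=> m_gt0; rewrite big_ord_recr /= ; apply: lerD; last first.
  rewrite /grid_level ltnn leqnn /grid_radius.
  rewrite [leLHS](_ : _ = 2^-1 ^+ m / 2) //.
  have -> : 1 - 2 * (n%:R / (4 * n%:R)) = 2^-1 :> R by field.
  by field; exact: n_neq0.
have -> : \sum_(k < n) (grid_level k.+1 - grid_level k) * (1 - 2 * grid_radius k) ^+ m =
    (16 * n%:R ^+ 2)^-1 * \sum_(k < n) (2 * k + 1)%:R * (1 - k%:R / (2 * n)%:R) ^+ m.
  rewrite big_distrr /=; apply: eq_bigr => k _.
  rewrite /grid_level (ltn_ord k) (ltnW (ltn_ord k)) /grid_radius natrM -natr1 natrD natrM.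
  have -> : 1 - 2 * (k%:R / (4 * n%:R)) = 1 - k%:R / (2 * n%:R) :> R by field.
  by field.
have m_ge0 : 0 <= m%:R :> R by [].
rewrite [leRHS](_ : _ = (16 * n%:R ^+ 2)^-1 *
   (((2 * n)%:R + m%:R) * (2 * (2 * n)%:R + m%:R) / ((m%:R + 1) * (m%:R + 2)))); last first.
  by rewrite natrM; field; rewrite n_neq0 andbT; apply/andP; split; apply/eqP; lra.
rewrite ler_pM2l ?invr_gt0 ?mulr_gt0 ?exprn_gt0 //.
by apply: sum_odd_weighted_powers_le; rewrite ?muln_gt0 ?leq_pmull.
Qed.

End Grid.

Lemma exp2_ge_quadratic (R : realFieldType) m : (20 <= m)%N ->
  1000 * ((m%:R + 1) * (m%:R + 2)) <= (2 : R) ^+ m.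
Proof.
move=> /subnKC <-; elim: (m - 20)%N => [|k IH].
  have -> : (2 : R) ^+ (20 + 0) = (2 ^+ 5) ^+ 4 by rewrite -exprM.
  have -> : (2 : R) ^+ 5 = 32 by rewrite !exprS expr0; lra.
  by rewrite addn0 !exprS expr0; lra.
rewrite addnS exprS -natr1.
have : 20 <= (20 + k)%:R :> R by rewrite ler_nat leq_addr.
by move: IH; set x := (20 + k)%:R; set p := 2 ^+ _; nra.
Qed.

Lemma sum_grid_tail_200m_le (R : realFieldType) m : (20 <= m)%N ->
  \sum_(k < (200 * m).+1) (grid_level (200 * m) k.+1 - grid_level (200 * m) k) *
     (1 - 2 * grid_radius (200 * m) k) ^+ m
  <= (101%:R / 100%:R) / (2 * (m.+1)%:R * (m.+2)%:R) :> R.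
Proof.
move=> m_ge20; have m_gt0 : (0 < m)%N by apply: leq_trans m_ge20.
have m_ge20R : 20 <= m%:R :> R by rewrite (ler_nat R 20).
have n_gt0 : (0 < 200 * m)%N by rewrite muln_gt0.
apply: le_trans (sum_grid_tail_le n_gt0 m_gt0) _.
set X := (m%:R + 1) * (m%:R + 2) : R.
have X_gt0 : 0 < X by rewrite mulr_gt0 //; lra.
have pow_le : 2^-1 ^+ m <= (1000 * X)^-1 :> R.
  rewrite exprVn lef_pV2 ?posrE; first exact: exp2_ge_quadratic.
    by rewrite exprn_gt0 ?ltr0n.
  by rewrite mulr_gt0 ?ltr0n.
have -> : (2 * (200 * m)%:R + m%:R) * (4 * (200 * m)%:R + m%:R) /
    (16 * (200 * m)%:R ^+ 2 * X) = 401 * 801 / (4 * (400 * 400)) * X^-1.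
  by rewrite natrM; field; apply/andP; split; apply/eqP; lra.
have -> : 101%:R / 100%:R / (2 * m.+1%:R * m.+2%:R) = 101 / 200 * X^-1 :> R.
  by rewrite /X -!natr1 -addrA; field; apply/andP; split; apply/eqP; lra.
rewrite invfM in pow_le.
have : 0 < X^-1 by rewrite invr_gt0.
lra.
Qed.

Lemma sum_steps_ge_min (R : realDomainType) (t : nat -> R) (y : R) n :
  (forall k, t k <= t k.+1) ->
  Num.min y (t n) - t 0 <= \sum_(k < n) (t k.+1 - t k) * (t k < y)%R%:R.
Proof.
move=> t_nd; elim: n => [|n IH]; first by rewrite big_ord0 subr_le0 ge_min lexx orbT.
rewrite big_ord_recr /=; have := t_nd n; case: ltP => [tn_lt_y|y_le_tn] tn_le.
  apply: le_trans (lerD IH (lexx _)); rewrite mulr1 (min_idPr (ltW tn_lt_y)).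
  have -> : t n - t 0 + (t n.+1 - t n) = t n.+1 - t 0 by ring.
  by rewrite lerD2r ge_min lexx orbT.
rewrite mulr0n mulr0 addr0; apply: le_trans IH; rewrite lerD2r.
by rewrite (min_idPl y_le_tn) ge_min lexx.
Qed.

Section TailSum.
Context d (T : measurableType d) (R : realType).
Local Open Scope ereal_scope.

Lemma measurable_fun_bigmin (I : Type) (s : seq I) (D : set T) (f : I -> T -> \bar R) :
  (forall i, measurable_fun D (f i)) ->
  measurable_fun D (fun x => \big[Order.min/+oo]_(i <- s) f i x).
Proof.
move=> mf; elim: s => [|i s IH].
  by under eq_fun do rewrite big_nil; exact: measurable_cst.
by under eq_fun do rewrite big_cons; exact: measurable_mine.
Qed.

Lemma integral_le_sum_tails (mu : {measure set T -> \bar R}) (Y : T -> \bar R)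
    (t : nat -> R) n :
  measurable_fun setT Y -> (forall x, 0 <= Y x) ->
  (forall k, (t k <= t k.+1)%R) -> t 0%N = 0%R -> {ae mu, forall x, Y x <= (t n)%:E} ->
  \int[mu]_x Y x <= \sum_(k < n) (t k.+1 - t k)%:E * mu [set x | (t k)%:E < Y x].
Proof.
move=> mY Y_ge0 t_nd t0 Y_le.
pose A k := [set x | (t k)%:E < Y x].
have mA k : measurable (A k).
  by rewrite -[A k]setTI; exact: emeasurable_fun_o_infty.
have step_ge0 k : (0 <= t k.+1 - t k)%R by rewrite subr_ge0.
pose S x := \sum_(k < n) ((t k.+1 - t k) * \1_(A k) x)%:E.
have -> : \sum_(k < n) (t k.+1 - t k)%:E * mu (A k) = \int[mu]_x S x.
  rewrite ge0_integral_sum //; last 2 first.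
  - by move=> k; apply/measurable_EFinP/measurable_funM => //; exact: measurable_indic.
  - by move=> k x _; rewrite lee_fin mulr_ge0.
  apply: eq_bigr => k _; under eq_integral do rewrite EFinM.
  rewrite ge0_integralZl_EFin //; last exact/measurable_EFinP/measurable_indic.
  by rewrite integral_indic // setIT.
apply: ae_ge0_le_integral => //.
- by move=> x _; apply: sume_ge0 => k _; rewrite lee_fin mulr_ge0.
- apply: emeasurable_sum => k.
  by apply/measurable_EFinP/measurable_funM => //; exact: measurable_indic.
apply: filterS Y_le => x Yx_le _.
have Yx_fin : Y x = (fine (Y x))%:E.
  by rewrite fineK // ge0_fin_numE // (le_lt_trans Yx_le (ltry _)).
rewrite /S sumEFin Yx_fin lee_fin.
have in_A k : (x \in A k) = (t k < fine (Y x))%R.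
  by rewrite -lte_fin -Yx_fin; apply/idP/idP => [/set_mem|/mem_set].
under eq_bigr do rewrite indicE in_A.
apply: le_trans (sum_steps_ge_min (fine (Y x)) n t_nd); rewrite t0 subr0.
by rewrite (min_idPl _) // -lee_fin -Yx_fin.
Qed.

End TailSum.

Section UniformUnitInterval.
Variable R : realType.
Local Notation U := (uniform_prob (@ltr01 R)).

Lemma uniform01_itv (a b : R) : 0 <= a -> a <= b -> b <= 1 -> U `[a, b] = (b - a)%:E.
Proof.
move=> a_ge0 ab b_le1; rewrite /uniform_prob.
rewrite (eq_integral (cst 1%:E)); last first.
  move=> x; rewrite inE /= in_itv /= => /andP[ax xb].
  by rewrite /uniform_pdf ifT ?subr0 ?invr1 //; apply/andP; split; lra.
rewrite integral_cst //= lebesgue_measure_itv /= lte_fin mul1e.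
have [<-|a_neq_b] := eqVneq a b; first by rewrite ltxx subrr.
by rewrite lt_neqAle a_neq_b ab.
Qed.

Lemma uniform01_setC01 : U (~` `[0, 1]) = 0%E.
Proof.
rewrite probability_setC // -[X in (1 - X)%E]/(U `[0, 1]).
by rewrite uniform01_itv ?ler01 // subr0 subee.
Qed.

Lemma sqr_dist_gt_setE (c r : R) : 0 <= r ->
  [set x | r ^+ 2 < (c - x) ^+ 2] = ~` `[c - r, c + r].
Proof.
move=> r_ge0; apply/seteqP; split => x /=; rewrite in_itv /=.
  by move=> h /andP[h1 h2]; nra.
by move=> h; rewrite ltNge; apply: contra_notN h => h; apply/andP; split; nra.
Qed.

Lemma uniform01_sqr_dist_gt (c r : R) : 0 <= r -> r <= c -> c + r <= 1 ->
  U [set x | r ^+ 2 < (c - x) ^+ 2] = (1 - 2 * r)%:E.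
Proof.
move=> r_ge0 rc cr_le1; rewrite sqr_dist_gt_setE // probability_setC //.
rewrite -[X in (1 - X)%E]/(U `[c - r, c + r]).
by rewrite uniform01_itv; [rewrite -EFinB; congr (_%:E); ring | lra | lra | lra].
Qed.

End UniformUnitInterval.

Section IndependentUniforms.
Context d (T : measurableType d) (R : realType) (P : probability T R) (m : nat).
Variable theta : 'I_m -> {RV P >-> R}.
Hypothesis indep : mutually_independent P (fun j => (theta j : T -> R)).
Hypothesis unif : forall j, uniform01 P (theta j).

Definition min_sqr_dist (c : R) x :=
  \big[Order.min/+oo%E]_(j < m) ((c - theta j x) ^+ 2)%:E.

Lemma measurable_min_sqr_dist c : measurable_fun setT (min_sqr_dist c).
Proof.
apply: measurable_fun_bigmin => j; apply/measurable_EFinP.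
by apply: measurable_funX; apply: measurable_funB.
Qed.

Lemma min_sqr_dist_ge0 c x : (0 <= min_sqr_dist c x)%E.
Proof. by apply: le_bigmin => // j _; rewrite lee_fin sqr_ge0. Qed.

Lemma ae_uniform01_in01 j : {ae P, forall x, 0 <= theta j x <= 1}.
Proof.
exists (theta j @^-1` ~` `[0, 1]); split.
- by apply: measurable_funPTI; apply: measurableC.
- by rewrite unif ?uniform01_setC01 //; apply: measurableC.
- by move=> x /= x01; rewrite in_itv.
Qed.

Lemma ae_min_sqr_dist_le (c s : R) : (0 < m)%N ->
  c ^+ 2 <= s -> (1 - c) ^+ 2 <= s -> {ae P, forall x, (min_sqr_dist c x <= s%:E)%E}.
Proof.
move=> m_gt0 c2_le c1_le; apply: filterS (ae_uniform01_in01 (Ordinal m_gt0)) => x /andP[x0 x1].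
apply: le_trans (bigmin_le _ (Ordinal m_gt0) _) _; rewrite lee_fin.
set y := theta _ x in x0 x1 *; case: (lerP y c) => yc; nra.
Qed.

Lemma prob_min_sqr_dist_gt (c r : R) : 0 <= r -> r <= c -> c + r <= 1 ->
  P [set x | ((r ^+ 2)%:E < min_sqr_dist c x)%E] = ((1 - 2 * r) ^+ m)%:E.
Proof.
move=> r_ge0 rc cr_le1.
have -> : [set x | ((r ^+ 2)%:E < min_sqr_dist c x)%E] =
    \bigcap_(j in [set: 'I_m]) (theta j @^-1` [set y | r ^+ 2 < (c - y) ^+ 2]).
  apply/seteqP; split => x /=.
    by move=> /bigmin_gtP[_ gt_r] j _; have := gt_r j isT; rewrite lte_fin.
  move=> gt_r; apply/bigmin_gtP; split=> [|j _]; first exact: ltry.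
  by rewrite lte_fin; exact: gt_r.
have mB : measurable [set y : R | r ^+ 2 < (c - y) ^+ 2].
  by rewrite sqr_dist_gt_setE //; apply: measurableC.
rewrite indep //; under eq_bigr do rewrite unif // uniform01_sqr_dist_gt //.
by rewrite prodEFin prodr_const card_ord.
Qed.

End IndependentUniforms.

Theorem lemma1 (d : measure_display) (T : measurableType d) (R : realType)
  (P : probability T R) (m : nat) (theta : 'I_m -> {RV P >-> R}) :
  mutually_independent P (fun j => (theta j : T -> R)) ->
  (forall j, uniform01 P (theta j)) ->
  (20 <= m)%N ->
  (\int[P]_x (\big[Order.min/+oo%E]_(j < m) ((4^-1 - theta j x) ^+ 2)%:E)
     <= ((101%:R / 100%:R : R) / (2 * (m.+1)%:R * (m.+2)%:R))%:E)%E.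
Proof.
move=> indep unif m_ge20; have m_gt0 : (0 < m)%N by apply: leq_trans m_ge20.
set n := (200 * m)%N; have n_gt0 : (0 < n)%N by rewrite muln_gt0.
have Y_le : {ae P, forall x, (min_sqr_dist theta 4^-1 x <= (grid_level n n.+1)%:E)%E}.
  by rewrite /grid_level ltnn; apply: ae_min_sqr_dist_le => //; lra.
apply: le_trans (integral_le_sum_tails (measurable_min_sqr_dist theta _)
  (min_sqr_dist_ge0 theta _) (grid_level_nondecreasing n_gt0) (grid_level0 n) Y_le) _.
rewrite (eq_bigr (fun k : 'I_n.+1 =>
    ((grid_level n k.+1 - grid_level n k) * (1 - 2 * grid_radius n k) ^+ m)%:E)); last first.
  move=> k _; have k_le_n : (k <= n)%N by rewrite -ltnS.
  have r_ge0 : 0 <= grid_radius n k :> R := radius_ge0 n k.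
  have r_le : grid_radius n k <= 4^-1 :> R := radius_le n_gt0 k_le_n.
  rewrite EFinM /grid_level k_le_n; congr (_ * _)%E.
  by apply: prob_min_sqr_dist_gt => //; lra.
by rewrite sumEFin lee_fin; apply: sum_grid_tail_200m_le.
Qed.
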